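(* From any (code for a) computable tree $T\subseteq 2^{<\omega}$ one may uniformly compute a (code for a) computable function $f_T:[0,1]\to[0,1]$ such that: (1) $f_T$ is continuous and increasing with $f_T(x)\ge x$ for all $x$; (2) $f_T(x)=x$ if and only if $x\in\{0,1\}$, or $x\in\mathcal{C}$ and $c^{-1}(x)\in[T]$.
   Context: $2^{<\omega}$ is the set of finite binary strings; a tree is a subset of $2^{<\omega}$ closed under initial segments, and it is computable if it is a computable set under a standard computable coding of strings by natural numbers. $[T]$ is the set of $X\in 2^\omega$ all of whose finite initial segments lie in $T$. $\mathcal{C}\subseteq[0,1]$ is the set of $x$ whose ternary expansion begins with digit $1$ and continues using only digits $0$ and $2$; for $X\in 2^\omega$, $c(X)$ is the unique $x\in\mathcal{C}$ whose first ternary digit is $1$ and whose $(n+1)$st ternary digit (after the point, counting the first as digit $0$... i.e. the digit following the $n$ digits after the leading $1$) is $2X(n)$. A code for a continuous $f:[0,1]\to[0,1]$ consists of Cauchy names (rational approximations within $2^{-n}$ for every $n$) of $f(q)$ for each rational $q\in[0,1]$ together with a modulus of uniform continuity $d:\mathbb{N}\to\mathbb{N}$ ($|x-y|<2^{-d(m)}\Rightarrow |f(x)-f(y)|<2^{-m}$); $f$ is computable if it has a computable code. ''Uniformly compute'' means there is a single algorithm which, given a code for $T$, produces a code for $f_T$. *)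

From Stdlib Require Import Reals Lra Lia List Arith ZArith.
Import ListNotations.
Open Scope R_scope.

Inductive prog : Type :=
| PZero : prog
| PSucc : prog
| PProj : nat -> prog
| POracle : prog
| PComp : prog -> list prog -> prog
| PRec : prog -> prog -> prog
| PMu : prog -> prog.

Inductive eval (alpha : nat -> nat) : prog -> list nat -> nat -> Prop :=
| ev_zero xs : eval alpha PZero xs 0
| ev_succ xs : eval alpha PSucc xs (S (nth 0 xs 0%nat))
| ev_proj i xs : eval alpha (PProj i) xs (nth i xs 0%nat)
| ev_oracle xs : eval alpha POracle xs (alpha (nth 0 xs 0%nat))
| ev_comp f gs xs ys z :
    Forall2 (fun g y => eval alpha g xs y) gs ys ->
    eval alpha f ys z -> eval alpha (PComp f gs) xs z
| ev_rec0 f g xs y : eval alpha f xs y -> eval alpha (PRec f g) (0%nat :: xs) y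
| ev_recS f g n xs z y :
    eval alpha (PRec f g) (n :: xs) z -> eval alpha g (n :: z :: xs) y ->
    eval alpha (PRec f g) (S n :: xs) y
| ev_mu f xs n :
    eval alpha f (n :: xs) 0%nat ->
    (forall m, (m < n)%nat -> exists k, eval alpha f (m :: xs) (S k)) ->
    eval alpha (PMu f) xs n.

(** A function nat -> nat is computable if some oracle-free program
    (the oracle is the constant 0 function) computes it. *)
Definition computable (g : nat -> nat) : Prop :=
  exists p : prog, forall n, eval (fun _ => 0%nat) p [n] (g n).

(** Standard coding of finite binary strings: the string b0 b1 ... b(k-1)
    is coded by the number whose binary expansion is 1 b0 b1 ... b(k-1).
    This is a bijection between 2^{<omega} and the positive naturals. *)
Definition strcode (s : list bool) : nat :=
  fold_left (fun acc (b : bool) => (2 * acc + (if b then 1 else 0))%nat) s 1%nat.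

Definition npair (a b : nat) : nat := ((a + b) * (a + b + 1) / 2 + b)%nat.

Definition is_tree (T : list bool -> Prop) : Prop :=
  forall s t : list bool, T (s ++ t) -> T s.

Definition tree_code (T : list bool -> Prop) (alpha : nat -> nat) : Prop :=
  alpha 0%nat = 0%nat /\
  forall s, (T s -> alpha (strcode s) = 1%nat) /\ (~ T s -> alpha (strcode s) = 0%nat).

Definition computable_tree (T : list bool -> Prop) : Prop :=
  is_tree T /\ exists alpha, tree_code T alpha /\ computable alpha.

Definition in_body (T : list bool -> Prop) (X : nat -> bool) : Prop :=
  forall n, T (map X (seq 0 n)).

Definition is_cmap (X : nat -> bool) (x : R) : Prop :=
  Un_cv (fun N => sum_f_R0 (fun n => 2 * (if X n then 1 else 0) / 3 ^ (n + 2)) N)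
        (x - 1 / 3).

Definition in_C (x : R) : Prop := exists X, is_cmap X x.

(** Codes for continuous functions [0,1] -> [0,1], as a single h : nat -> nat:
    - the rational q = a/(b+1) (for a <= b+1, so q in [0,1]) has Cauchy name
      n |-> zdec (h <0,<<a,b>,<n,0>>>) / (h <0,<<a,b>,<n,1>>> + 1),
    - the modulus of uniform continuity is m |-> h <1,m>. *)
Definition zdec (k : nat) : Z :=
  if Nat.even k then Z.of_nat (Nat.div2 k) else (- Z.of_nat (S (Nat.div2 k)))%Z.

Definition code_approx (h : nat -> nat) (a b n : nat) : R :=
  IZR (zdec (h (npair 0 (npair (npair a b) (npair n 0))))) /
  INR (S (h (npair 0 (npair (npair a b) (npair n 1))))).

Definition code_modulus (h : nat -> nat) (m : nat) : nat := h (npair 1 m).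

Definition in01 (x : R) : Prop := 0 <= x <= 1.

Definition is_code (h : nat -> nat) (f : R -> R) : Prop :=
  (forall a b n : nat, (a <= S b)%nat ->
     Rabs (code_approx h a b n - f (INR a / INR (S b))) <= (/ 2) ^ n) /\
  (forall (m : nat) (x y : R), in01 x -> in01 y ->
     Rabs (x - y) < (/ 2) ^ (code_modulus h m) -> Rabs (f x - f y) < (/ 2) ^ m).

(* f_T(x) = x + sum_k 4^-(k+1) d_k(x), where d_k(x) is the distance from x to the union
   of {0, 1} and of the level-k Cantor intervals I_s (|s| = k) of the strings s in T.
   Each d_k is 1-Lipschitz and bounded by min(x, 1 - x), so f_T is increasing,
   4/3-Lipschitz and maps [0,1] into itself; and f_T(x) = x iff every d_k(x) vanishes,
   i.e. x is 0, 1, or meets a live interval at every level, which by nesting means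
   x = c(X) with every prefix of X in T.  At a rational a/(b+1) each d_k is a rational
   with denominator (b+1) 3^(k+1), so the n-th partial sum is computed exactly by
   natural-number arithmetic relative to the oracle for T, and the tail is below 2^-n. *)

From Coquelicot Require Import Coquelicot.
From Stdlib Require Import Reals List Lia Lra Arith Classical ClassicalEpsilon.
Import ListNotations.

(** * Programs relative to an oracle *)

Open Scope nat_scope.

Definition ocomputable (F : (nat -> nat) -> list nat -> nat) : Prop :=
  exists p, forall al xs, eval al p xs (F al xs).

Definition ocomputable_list (Fs : (nat -> nat) -> list nat -> list nat) : Prop :=
  exists ps, forall al xs, Forall2 (fun p y => eval al p xs y) ps (Fs al xs).

Definition ocomputable1 (f : nat -> nat) : Prop :=
  ocomputable (fun _ xs => f (nth 0 xs 0)).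
Definition ocomputable2 (f : nat -> nat -> nat) : Prop :=
  ocomputable (fun _ xs => f (nth 0 xs 0) (nth 1 xs 0)).
Definition ocomputable3 (f : nat -> nat -> nat -> nat) : Prop :=
  ocomputable (fun _ xs => f (nth 0 xs 0) (nth 1 xs 0) (nth 2 xs 0)).
Definition ocomputable3o (f : (nat -> nat) -> nat -> nat -> nat -> nat) : Prop :=
  ocomputable (fun al xs => f al (nth 0 xs 0) (nth 1 xs 0) (nth 2 xs 0)).
Definition ocomputable4o (f : (nat -> nat) -> nat -> nat -> nat -> nat -> nat) : Prop :=
  ocomputable (fun al xs => f al (nth 0 xs 0) (nth 1 xs 0) (nth 2 xs 0) (nth 3 xs 0)).

Lemma ocomputable_ext F G :
  ocomputable F -> (forall al xs, F al xs = G al xs) -> ocomputable G.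
Proof. intros [p Hp] E; exists p; intros; rewrite <- E; auto. Qed.

Lemma oc_proj i : ocomputable (fun _ xs => nth i xs 0).
Proof. exists (PProj i); constructor. Qed.

Lemma oc_succ : ocomputable1 S.
Proof. exists PSucc; constructor. Qed.

Lemma ocl_nil : ocomputable_list (fun _ _ => []).
Proof. exists []; constructor. Qed.

Lemma ocl_cons F Fs : ocomputable F -> ocomputable_list Fs ->
  ocomputable_list (fun al xs => F al xs :: Fs al xs).
Proof. intros [p Hp] [ps Hps]; exists (p :: ps); constructor; auto. Qed.

Lemma oc_comp F Gs : ocomputable F -> ocomputable_list Gs ->
  ocomputable (fun al xs => F al (Gs al xs)).
Proof. intros [pf Hf] [ps Hps]; exists (PComp pf ps); econstructor; eauto. Qed.

Lemma oc_oracle G : ocomputable G -> ocomputable (fun al xs => al (G al xs)).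
Proof.
  intros HG. assert (Ho : ocomputable (fun al xs => al (nth 0 xs 0))).
  { exists POracle; constructor. }
  exact (oc_comp _ _ Ho (ocl_cons _ _ HG ocl_nil)).
Qed.

Fixpoint recf (F : list nat -> nat) (G : list nat -> nat) (n : nat) (ys : list nat) : nat :=
  match n with 0 => F ys | S i => G (i :: recf F G i ys :: ys) end.

Lemma oc_rec F G N Ps : ocomputable F -> ocomputable G -> ocomputable N ->
  ocomputable_list Ps ->
  ocomputable (fun al xs => recf (F al) (G al) (N al xs) (Ps al xs)).
Proof.
  intros [pf Hf] [pg Hg] [pn Hn] [ps Hps].
  exists (PComp (PRec pf pg) (pn :: ps)); intros al xs.
  econstructor; [constructor; auto |].
  induction (N al xs); econstructor; eauto.
Qed.

Lemma oc_const c : ocomputable (fun _ _ => c).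
Proof.
  induction c as [|c IH]; [exists PZero; constructor |].
  exact (oc_comp _ _ oc_succ (ocl_cons _ _ IH ocl_nil)).
Qed.

Section Application.
Variables G1 G2 G3 G4 : (nat -> nat) -> list nat -> nat.
Hypotheses (H1 : ocomputable G1) (H2 : ocomputable G2)
           (H3 : ocomputable G3) (H4 : ocomputable G4).

Lemma oc_app1 f : ocomputable1 f -> ocomputable (fun al xs => f (G1 al xs)).
Proof. intro Hf; exact (oc_comp _ _ Hf (ocl_cons _ _ H1 ocl_nil)). Qed.

Lemma oc_app2 f : ocomputable2 f ->
  ocomputable (fun al xs => f (G1 al xs) (G2 al xs)).
Proof.
  intro Hf; exact (oc_comp _ _ Hf (ocl_cons _ _ H1 (ocl_cons _ _ H2 ocl_nil))).
Qed.

Lemma oc_app3 f : ocomputable3 f ->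
  ocomputable (fun al xs => f (G1 al xs) (G2 al xs) (G3 al xs)).
Proof.
  intro Hf.
  exact (oc_comp _ _ Hf (ocl_cons _ _ H1 (ocl_cons _ _ H2 (ocl_cons _ _ H3 ocl_nil)))).
Qed.

Lemma oc_app3o f : ocomputable3o f ->
  ocomputable (fun al xs => f al (G1 al xs) (G2 al xs) (G3 al xs)).
Proof.
  intro Hf.
  exact (oc_comp _ _ Hf (ocl_cons _ _ H1 (ocl_cons _ _ H2 (ocl_cons _ _ H3 ocl_nil)))).
Qed.

Lemma oc_app4o f : ocomputable4o f ->
  ocomputable (fun al xs => f al (G1 al xs) (G2 al xs) (G3 al xs) (G4 al xs)).
Proof.
  intro Hf.
  exact (oc_comp _ _ Hf
    (ocl_cons _ _ H1 (ocl_cons _ _ H2 (ocl_cons _ _ H3 (ocl_cons _ _ H4 ocl_nil))))).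
Qed.
End Application.

Create HintDb ocomp.
#[local] Hint Resolve oc_succ : ocomp.

Ltac ocomp :=
  match goal with
  | |- ocomputable (fun _ xs => nth _ xs 0) => apply oc_proj
  | |- ocomputable (fun _ _ => _) => apply oc_const
  | |- ocomputable (fun al xs => al (@?G al xs)) => apply (oc_oracle G); ocomp
  | |- ocomputable (fun al xs => recf (@?F al) (@?G al) (@?N al xs) (@?Ps al xs)) =>
      apply (oc_rec F G N Ps); [ocomp | ocomp | ocomp | ocomp_list]
  | |- ocomputable (fun al xs =>
         ?f al (@?G1 al xs) (@?G2 al xs) (@?G3 al xs) (@?G4 al xs)) =>
      apply (oc_app4o G1 G2 G3 G4); [ocomp | ocomp | ocomp | ocomp | solve [auto with ocomp]]
  | |- ocomputable (fun al xs => ?f al (@?G1 al xs) (@?G2 al xs) (@?G3 al xs)) =>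
      apply (oc_app3o G1 G2 G3); [ocomp | ocomp | ocomp | solve [auto with ocomp]]
  | |- ocomputable (fun al xs => ?f (@?G1 al xs) (@?G2 al xs) (@?G3 al xs)) =>
      apply (oc_app3 G1 G2 G3); [ocomp | ocomp | ocomp | solve [auto with ocomp]]
  | |- ocomputable (fun al xs => ?f (@?G1 al xs) (@?G2 al xs)) =>
      apply (oc_app2 G1 G2); [ocomp | ocomp | solve [auto with ocomp]]
  | |- ocomputable (fun al xs => ?f (@?G1 al xs)) =>
      apply (oc_app1 G1); [ocomp | solve [auto with ocomp]]
  end
with ocomp_list :=
  match goal with
  | |- ocomputable_list (fun _ _ => []) => apply ocl_nil
  | |- ocomputable_list (fun al xs => @?F al xs :: @?Fs al xs) =>
      apply (ocl_cons F Fs); [ocomp | ocomp_list]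
  end.

Lemma oc_add : ocomputable2 Nat.add.
Proof.
  eapply ocomputable_ext with (F := fun _ xs =>
    recf (fun ys => nth 0 ys 0) (fun ys => S (nth 1 ys 0)) (nth 0 xs 0) [nth 1 xs 0]).
  - ocomp.
  - intros _ xs; induction (nth 0 xs 0); simpl; auto.
Qed.
#[local] Hint Resolve oc_add : ocomp.

Lemma oc_mul : ocomputable2 Nat.mul.
Proof.
  eapply ocomputable_ext with (F := fun _ xs =>
    recf (fun _ => 0) (fun ys => nth 2 ys 0 + nth 1 ys 0) (nth 0 xs 0) [nth 1 xs 0]).
  - ocomp.
  - intros _ xs; induction (nth 0 xs 0); simpl in *; lia.
Qed.
#[local] Hint Resolve oc_mul : ocomp.

Lemma oc_pred : ocomputable1 Nat.pred.
Proof.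
  eapply ocomputable_ext with (F := fun _ xs =>
    recf (fun _ => 0) (fun ys => nth 0 ys 0) (nth 0 xs 0) []).
  - ocomp.
  - intros _ xs; destruct (nth 0 xs 0); reflexivity.
Qed.
#[local] Hint Resolve oc_pred : ocomp.

Lemma oc_sub : ocomputable2 Nat.sub.
Proof.
  eapply ocomputable_ext with (F := fun _ xs =>
    recf (fun ys => nth 0 ys 0) (fun ys => pred (nth 1 ys 0)) (nth 1 xs 0) [nth 0 xs 0]).
  - ocomp.
  - intros _ xs; induction (nth 1 xs 0); simpl in *; lia.
Qed.
#[local] Hint Resolve oc_sub : ocomp.

Lemma oc_pow : ocomputable2 Nat.pow.
Proof.
  eapply ocomputable_ext with (F := fun _ xs =>
    recf (fun _ => 1) (fun ys => nth 1 ys 0 * nth 2 ys 0) (nth 1 xs 0) [nth 0 xs 0]).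
  - ocomp.
  - intros _ xs; induction (nth 1 xs 0); simpl in *; lia.
Qed.
#[local] Hint Resolve oc_pow : ocomp.

Lemma oc_min : ocomputable2 Nat.min.
Proof.
  eapply ocomputable_ext with (F := fun _ xs => nth 0 xs 0 - (nth 0 xs 0 - nth 1 xs 0)).
  - ocomp.
  - intros; lia.
Qed.
#[local] Hint Resolve oc_min : ocomp.

Definition ifz (c u v : nat) : nat := match c with 0 => u | S _ => v end.

Lemma oc_ifz : ocomputable3 ifz.
Proof.
  eapply ocomputable_ext with (F := fun _ xs =>
    recf (fun ys => nth 0 ys 0) (fun ys => nth 3 ys 0) (nth 0 xs 0) [nth 1 xs 0; nth 2 xs 0]).
  - ocomp.
  - intros _ xs; destruct (nth 0 xs 0); reflexivity.
Qed.
#[local] Hint Resolve oc_ifz : ocomp.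

Definition parity (n : nat) : nat := n mod 2.

Lemma div2_parity n : n = 2 * Nat.div2 n + parity n /\ parity n < 2.
Proof.
  unfold parity; rewrite Nat.div2_div.
  split; [apply Nat.div_mod_eq | apply Nat.mod_upper_bound; lia].
Qed.

Lemma oc_parity : ocomputable1 parity.
Proof.
  eapply ocomputable_ext with (F := fun _ xs =>
    recf (fun _ => 0) (fun ys => 1 - nth 1 ys 0) (nth 0 xs 0) []).
  - ocomp.
  - intros _ xs; induction (nth 0 xs 0) as [|n IH]; cbn [recf nth] in *; [reflexivity|].
    rewrite IH. pose proof (div2_parity n); pose proof (div2_parity (S n)); lia.
Qed.
#[local] Hint Resolve oc_parity : ocomp.

Lemma oc_div2 : ocomputable1 Nat.div2.
Proof.
  eapply ocomputable_ext with (F := fun _ xs =>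
    recf (fun _ => 0) (fun ys => nth 1 ys 0 + parity (nth 0 ys 0)) (nth 0 xs 0) []).
  - ocomp.
  - intros _ xs; induction (nth 0 xs 0) as [|n IH]; cbn [recf nth] in *; [reflexivity|].
    rewrite IH. pose proof (div2_parity n); pose proof (div2_parity (S n)); lia.
Qed.
#[local] Hint Resolve oc_div2 : ocomp.

Fixpoint tri (n : nat) : nat := match n with 0 => 0 | S m => tri m + S m end.

(* [1 - (m - N)] is the indicator of [m <= N], so [diag_count N (S N)] is the index
   [a + b] of the diagonal through [N = npair a b]. *)
Fixpoint diag_count (N M : nat) : nat :=
  match M with 0 => 0 | S v => diag_count N v + (1 - (tri (S v) - N)) end.

Definition unpair_r (N : nat) : nat := N - tri (diag_count N (S N)).
Definition unpair_l (N : nat) : nat := diag_count N (S N) - unpair_r N.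

Lemma oc_tri : ocomputable1 tri.
Proof.
  eapply ocomputable_ext with (F := fun _ xs =>
    recf (fun _ => 0) (fun ys => nth 1 ys 0 + S (nth 0 ys 0)) (nth 0 xs 0) []).
  - ocomp.
  - intros _ xs; induction (nth 0 xs 0); cbn [recf nth tri] in *; lia.
Qed.
#[local] Hint Resolve oc_tri : ocomp.

Lemma oc_diag_count : ocomputable2 diag_count.
Proof.
  eapply ocomputable_ext with (F := fun _ xs =>
    recf (fun _ => 0) (fun ys => nth 1 ys 0 + (1 - (tri (S (nth 0 ys 0)) - nth 2 ys 0)))
      (nth 1 xs 0) [nth 0 xs 0]).
  - ocomp.
  - intros _ xs; induction (nth 1 xs 0); cbn [recf nth diag_count] in *; lia.
Qed.
#[local] Hint Resolve oc_diag_count : ocomp.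

Lemma oc_unpair_r : ocomputable1 unpair_r.
Proof. unfold ocomputable1, unpair_r; ocomp. Qed.
#[local] Hint Resolve oc_unpair_r : ocomp.

Lemma oc_unpair_l : ocomputable1 unpair_l.
Proof. unfold ocomputable1, unpair_l; ocomp. Qed.
#[local] Hint Resolve oc_unpair_l : ocomp.

Lemma tri_double n : 2 * tri n = n * S n.
Proof. induction n; cbn [tri]; lia. Qed.

Lemma tri_mono m n : m <= n -> tri m <= tri n.
Proof. induction 1; cbn [tri]; lia. Qed.

Lemma npair_tri a b : npair a b = tri (a + b) + b.
Proof.
  unfold npair. replace ((a + b) * (a + b + 1)) with (tri (a + b) * 2)
    by (rewrite Nat.add_1_r; pose proof (tri_double (a + b)); lia).
  now rewrite Nat.div_mul.
Qed.

Lemma diag_count_npair a b M : diag_count (npair a b) M = Nat.min M (a + b).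
Proof.
  rewrite npair_tri. induction M as [|M IH]; cbn [diag_count]; [reflexivity|].
  rewrite IH. destruct (le_lt_dec (S M) (a + b)) as [H|H].
  - pose proof (tri_mono _ _ H). lia.
  - pose proof (tri_mono _ _ H). cbn [tri] in *. lia.
Qed.

Lemma unpair_npair a b : unpair_l (npair a b) = a /\ unpair_r (npair a b) = b.
Proof.
  unfold unpair_l, unpair_r. rewrite diag_count_npair.
  assert (a + b <= tri (a + b)) by (pose proof (tri_double (a + b)); nia).
  rewrite npair_tri, Nat.min_r by lia. lia.
Qed.

Lemma unpair_l_npair a b : unpair_l (npair a b) = a.
Proof. apply unpair_npair. Qed.
Lemma unpair_r_npair a b : unpair_r (npair a b) = b.
Proof. apply unpair_npair. Qed.
#[local] Hint Rewrite unpair_l_npair unpair_r_npair : unpair.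

(** * Cantor intervals *)

(* Node [j < 2 ^ k] of level [k] is the string of the [k] binary digits of [j], most
   significant first, so its code is [2 ^ k + j]; [tern k j] reads these digits in
   base 3, and the Cantor interval of the node is [[lend k j, rend k j]]. *)
Fixpoint tern (k j : nat) : nat :=
  match k with 0 => 0 | S k => 3 * tern k (Nat.div2 j) + parity j end.

Fixpoint shiftr (i j : nat) : nat :=
  match i with 0 => j | S i => Nat.div2 (shiftr i j) end.

Lemma shiftr_S_r i j : shiftr (S i) j = shiftr i (Nat.div2 j).
Proof. induction i; cbn [shiftr] in *; congruence. Qed.

Lemma tern_S_top k j : tern (S k) j = tern k j + parity (shiftr k j) * 3 ^ k.
Proof.
  revert j; induction k as [|k IH]; intro j; [cbn; lia|].
  rewrite shiftr_S_r.
  change (tern (S (S k)) j) with (3 * tern (S k) (Nat.div2 j) + parity j).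
  rewrite IH. cbn [tern Nat.pow]. lia.
Qed.

Lemma oc_shiftr : ocomputable2 shiftr.
Proof.
  eapply ocomputable_ext with (F := fun _ xs =>
    recf (fun ys => nth 0 ys 0) (fun ys => Nat.div2 (nth 1 ys 0)) (nth 0 xs 0) [nth 1 xs 0]).
  - ocomp.
  - intros _ xs; induction (nth 0 xs 0); cbn [recf nth shiftr] in *; congruence.
Qed.
#[local] Hint Resolve oc_shiftr : ocomp.

Lemma oc_tern : ocomputable2 tern.
Proof.
  eapply ocomputable_ext with (F := fun _ xs =>
    recf (fun _ => 0)
      (fun ys => nth 1 ys 0 + parity (shiftr (nth 0 ys 0) (nth 2 ys 0)) * 3 ^ nth 0 ys 0)
      (nth 0 xs 0) [nth 1 xs 0]).
  - ocomp.
  - intros _ xs; induction (nth 0 xs 0); cbn [recf nth] in *; [reflexivity|].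
    now rewrite tern_S_top, IHn.
Qed.
#[local] Hint Resolve oc_tern : ocomp.

Lemma tern_inj k j j' : j < 2 ^ k -> j' < 2 ^ k -> tern k j = tern k j' -> j = j'.
Proof.
  revert j j'; induction k as [|k IH]; intros j j' Hj Hj' E; cbn [Nat.pow tern] in *; [lia|].
  pose proof (div2_parity j); pose proof (div2_parity j').
  assert (Nat.div2 j = Nat.div2 j') by (apply IH; lia). lia.
Qed.

Open Scope R_scope.

Definition lnum (k j : nat) : nat := (3 ^ k + 2 * tern k j)%nat.
Definition lend (k j : nat) : R := INR (lnum k j) / 3 ^ (k + 1).
Definition rend (k j : nat) : R := (INR (lnum k j) + 1) / 3 ^ (k + 1).
Definition in_interval (k j : nat) (x : R) : Prop := lend k j <= x <= rend k j.

Lemma rend_lend k j : rend k j = lend k j + / 3 ^ (k + 1).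
Proof. unfold rend, lend. field. apply pow_nonzero. lra. Qed.

Lemma lend_le_rend k j : lend k j <= rend k j.
Proof.
  rewrite rend_lend. pose proof (Rinv_0_lt_compat (3 ^ (k + 1)) (pow_lt 3 (k + 1) ltac:(lra))).
  lra.
Qed.

Definition dist_interval (x l r : R) : R := Rmax 0 (l - x) + Rmax 0 (x - r).

Lemma dist_interval_nonneg x l r : 0 <= dist_interval x l r.
Proof.
  unfold dist_interval. pose proof (Rmax_l 0 (l - x)); pose proof (Rmax_l 0 (x - r)). lra.
Qed.

Lemma dist_interval_eq0 x l r : l <= r -> (dist_interval x l r = 0 <-> l <= x <= r).
Proof. intros. unfold dist_interval, Rmax. split; intros; repeat destruct Rle_dec; lra. Qed.

Lemma dist_interval_lip x y l r : l <= r ->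
  Rabs (dist_interval x l r - dist_interval y l r) <= Rabs (x - y).
Proof.
  intros. unfold dist_interval, Rmax, Rabs.
  repeat destruct Rle_dec; repeat destruct Rcase_abs; lra.
Qed.

Lemma Rmin_lip a b c d e :
  Rabs (a - c) <= e -> Rabs (b - d) <= e -> Rabs (Rmin a b - Rmin c d) <= e.
Proof. unfold Rmin, Rabs. intros. repeat destruct Rle_dec; repeat destruct Rcase_abs; lra. Qed.

Lemma Rmin_eq0 a b : 0 <= a -> 0 <= b -> (Rmin a b = 0 <-> a = 0 \/ b = 0).
Proof. unfold Rmin; intros; destruct Rle_dec; split; intros; lra. Qed.

Fixpoint live_dist (al : nat -> nat) (k : nat) (x : R) (J : nat) : R :=
  match J with
  | O => Rabs x
  | S j => match al (2 ^ k + j)%nat with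
           | O => live_dist al k x j
           | S _ => Rmin (live_dist al k x j) (dist_interval x (lend k j) (rend k j))
           end
  end.

Definition level_dist (al : nat -> nat) (k : nat) (x : R) : R :=
  Rmin (live_dist al k x (2 ^ k)) (Rabs (1 - x)).

Lemma live_dist_nonneg al k x J : 0 <= live_dist al k x J.
Proof.
  induction J; cbn [live_dist]; [apply Rabs_pos|].
  destruct (al _); auto. unfold Rmin; destruct Rle_dec; auto. apply dist_interval_nonneg.
Qed.

Lemma live_dist_le al k x J : live_dist al k x J <= Rabs x.
Proof.
  induction J; cbn [live_dist]; [lra|].
  destruct (al _); auto. eapply Rle_trans; [apply Rmin_l | auto].
Qed.

Lemma live_dist_lip al k x y J :
  Rabs (live_dist al k x J - live_dist al k y J) <= Rabs (x - y).
Proof.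
  induction J; cbn [live_dist]; [apply Rabs_triang_inv2|].
  destruct (al _); auto. apply Rmin_lip; auto. apply dist_interval_lip, lend_le_rend.
Qed.

Lemma live_dist_eq0 al k x J :
  live_dist al k x J = 0 <-> x = 0 \/
    exists j, (j < J)%nat /\ al (2 ^ k + j)%nat <> 0%nat /\ in_interval k j x.
Proof.
  induction J as [|J IH]; cbn [live_dist].
  - split; [intro H; left; apply Rabs_eq_0; exact H|].
    intros [->|[j [Hj _]]]; [apply Rabs_R0 | lia].
  - destruct (al (2 ^ k + J)%nat) eqn:E.
    + rewrite IH. split; intros [H|[j [H1 H2]]]; auto; right; exists j; split; auto; try lia.
      assert (j <> J) by (intro; subst; tauto). lia.
    + rewrite Rmin_eq0 by (apply live_dist_nonneg || apply dist_interval_nonneg).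
      rewrite IH, dist_interval_eq0 by apply lend_le_rend. split.
      * intros [[H|[j [H1 H2]]]|H]; auto; right.
        -- exists j; split; auto; lia.
        -- exists J; split; [lia | split; [lia | exact H]].
      * intros [H|[j [H1 H2]]]; auto. destruct (Nat.eq_dec j J); [subst; tauto|].
        left; right; exists j; split; auto; lia.
Qed.

Lemma level_dist_nonneg al k x : 0 <= level_dist al k x.
Proof.
  unfold level_dist, Rmin. destruct Rle_dec; [apply live_dist_nonneg | apply Rabs_pos].
Qed.

Lemma level_dist_le al k x : level_dist al k x <= Rabs (1 - x) /\ level_dist al k x <= Rabs x.
Proof.
  unfold level_dist. split; [apply Rmin_r|].
  eapply Rle_trans; [apply Rmin_l | apply live_dist_le].
Qed.

Lemma level_dist_lip al k x y : Rabs (level_dist al k x - level_dist al k y) <= Rabs (x - y).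
Proof.
  unfold level_dist. apply Rmin_lip; [apply live_dist_lip|].
  replace (x - y) with (- ((1 - x) - (1 - y))) by ring.
  rewrite Rabs_Ropp. apply Rabs_triang_inv2.
Qed.

Lemma level_dist_eq0 al k x :
  level_dist al k x = 0 <-> x = 0 \/ x = 1 \/
    exists j, (j < 2 ^ k)%nat /\ al (2 ^ k + j)%nat <> 0%nat /\ in_interval k j x.
Proof.
  unfold level_dist. rewrite Rmin_eq0 by (apply live_dist_nonneg || apply Rabs_pos).
  rewrite live_dist_eq0. split.
  - intros [[H|H]|H]; auto. right; left. apply Rabs_eq_0 in H. lra.
  - intros [H|[H|H]]; auto. right. rewrite H, Rminus_diag. apply Rabs_R0.
Qed.

(** * The function f_T *)

Definition weight (k : nat) : R := (/ 4) ^ (k + 1).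

Lemma weight_pos k : 0 < weight k.
Proof. apply pow_lt. lra. Qed.

Lemma is_series_weight : is_series weight (1 / 3).
Proof.
  assert (H := is_series_geom (/ 4) ltac:(rewrite Rabs_right; lra)).
  apply is_series_scal_r with (c := / 4) in H.
  replace (1 / 3) with (/ (1 - / 4) * / 4) by field.
  eapply is_series_ext; [|exact H]. intro n. unfold weight. rewrite pow_add. simpl. ring.
Qed.

Lemma Series_weight_scal c : Series (fun n => weight n * c) = c / 3.
Proof.
  rewrite Series_scal_r, (is_series_unique _ _ is_series_weight). field.
Qed.

Lemma ex_series_weight_scal c : ex_series (fun n => weight n * c).
Proof. apply ex_series_scal_r. eexists; apply is_series_weight. Qed.

Lemma Series_zero : Series (fun _ => 0) = 0.
Proof.
  rewrite (Series_ext _ (fun n => 0 * 1)) by (intro; ring). rewrite Series_scal_l. ring.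
Qed.

Lemma Series_nonneg a : (forall n, 0 <= a n) -> ex_series a -> 0 <= Series a.
Proof.
  intros H E. rewrite <- Series_zero.
  apply Series_le; auto. intro n; split; [lra | apply H].
Qed.

Lemma Series_ge_term a k : (forall n, 0 <= a n) -> ex_series a -> a k <= Series a.
Proof.
  intros H E. rewrite (Series_incr_n a (S k)) by (lia || auto). simpl pred.
  assert (0 <= Series (fun n => a (S k + n)%nat))
    by (apply Series_nonneg; [auto | apply ex_series_incr_n; auto]).
  destruct k; cbn [sum_f_R0]; [lra|].
  assert (0 <= sum_f_R0 a k) by (apply cond_pos_sum; auto). lra.
Qed.

Definition bump (al : nat -> nat) (x : R) (k : nat) : R := weight k * level_dist al k x.
Definition excess (al : nat -> nat) (x : R) : R := Series (bump al x).
Definition fT (al : nat -> nat) (x : R) : R := x + excess al x.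

Lemma bump_nonneg al x k : 0 <= bump al x k.
Proof. apply Rmult_le_pos; [left; apply weight_pos | apply level_dist_nonneg]. Qed.

Lemma bump_le al x k : bump al x k <= weight k * Rabs (1 - x).
Proof. apply Rmult_le_compat_l; [left; apply weight_pos | apply level_dist_le]. Qed.

Lemma ex_series_bump al x : ex_series (bump al x).
Proof.
  apply (ex_series_le (bump al x) (fun n => weight n * Rabs (1 - x)));
    [|apply ex_series_weight_scal].
  intro n. rewrite Rabs_right by (apply Rle_ge, bump_nonneg). apply bump_le.
Qed.

Lemma excess_nonneg al x : 0 <= excess al x.
Proof. apply Series_nonneg; [apply bump_nonneg | apply ex_series_bump]. Qed.

Lemma excess_le al x : excess al x <= Rabs (1 - x) / 3.
Proof.
  rewrite <- Series_weight_scal. apply Series_le; [|apply ex_series_weight_scal].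
  intro n; split; [apply bump_nonneg | apply bump_le].
Qed.

Lemma excess_lip al x y : Rabs (excess al x - excess al y) <= Rabs (x - y) / 3.
Proof.
  assert (Hb : forall n, Rabs (bump al x n - bump al y n) <= weight n * Rabs (x - y)).
  { intro n. unfold bump. rewrite <- Rmult_minus_distr_l, Rabs_mult.
    rewrite (Rabs_right (weight n)) by (left; apply weight_pos).
    apply Rmult_le_compat_l; [left; apply weight_pos | apply level_dist_lip]. }
  unfold excess. rewrite <- Series_minus by apply ex_series_bump.
  eapply Rle_trans; [apply Series_Rabs|].
  - apply (ex_series_le (fun n => Rabs (bump al x n - bump al y n))
                         (fun n => weight n * Rabs (x - y))); [|apply ex_series_weight_scal].
    intro n. rewrite Rabs_Rabsolu. apply Hb.
  - rewrite <- Series_weight_scal. apply Series_le; [|apply ex_series_weight_scal].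
    intro n; split; [apply Rabs_pos | apply Hb].
Qed.

Lemma excess_eq0 al x : excess al x = 0 <-> forall k, level_dist al k x = 0.
Proof.
  split.
  - intros H k. pose proof (Series_ge_term _ k (bump_nonneg al x) (ex_series_bump al x)).
    pose proof (bump_nonneg al x k). pose proof (weight_pos k).
    pose proof (level_dist_nonneg al k x). unfold excess, bump in *. nra.
  - intros H. unfold excess. rewrite <- Series_zero. apply Series_ext.
    intro n. unfold bump. rewrite H. ring.
Qed.

Lemma fT_lip al x y : Rabs (fT al x - fT al y) <= 4 / 3 * Rabs (x - y).
Proof.
  unfold fT. pose proof (excess_lip al x y).
  replace (x + excess al x - (y + excess al y)) with ((x - y) + (excess al x - excess al y))
    by ring.
  eapply Rle_trans; [apply Rabs_triang | lra].
Qed.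

Lemma fT_continuous al x eps : 0 < eps ->
  exists delta, 0 < delta /\ forall y, Rabs (y - x) < delta -> Rabs (fT al y - fT al x) < eps.
Proof.
  intro Heps. exists (eps / 2). split; [lra|].
  intros y Hy. eapply Rle_lt_trans; [apply fT_lip | lra].
Qed.

Lemma fT_increasing al x y : x < y -> fT al x < fT al y.
Proof.
  intros. unfold fT. pose proof (excess_lip al y x).
  unfold Rabs in *. repeat destruct Rcase_abs; lra.
Qed.

Lemma fT_ge al x : x <= fT al x.
Proof. unfold fT. pose proof (excess_nonneg al x). lra. Qed.

Lemma fT_in01 al x : in01 x -> in01 (fT al x).
Proof.
  unfold in01, fT. intros [H0 H1]. pose proof (excess_le al x). pose proof (excess_nonneg al x).
  rewrite Rabs_right in * by lra. lra.
Qed.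

Lemma fT_eq_iff al x : fT al x = x <-> forall k, level_dist al k x = 0.
Proof. rewrite <- excess_eq0. unfold fT. split; intro; lra. Qed.

Lemma fT_partial_sum al x n : in01 x ->
  Rabs (x + sum_f_R0 (bump al x) n - fT al x) <= (/ 2) ^ n.
Proof.
  intros [H0 H1]. unfold fT, excess.
  rewrite (Series_incr_n (bump al x) (S n)) by (lia || apply ex_series_bump). simpl pred.
  set (tail := Series (fun k => bump al x (S n + k))).
  assert (Htail : 0 <= tail).
  { apply Series_nonneg; [intro; apply bump_nonneg|]. apply ex_series_incr_n, ex_series_bump. }
  replace (x + sum_f_R0 (bump al x) n - (x + (sum_f_R0 (bump al x) n + tail)))
    with (- tail) by ring.
  rewrite Rabs_Ropp, Rabs_right by lra.
  assert (Hq : (/ 4) ^ S n <= (/ 2) ^ n).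
  { rewrite !pow_inv. apply Rinv_le_contravar; [apply pow_lt; lra|].
    replace 4 with (2 * 2) by ring. rewrite Rpow_mult_distr. cbn [pow].
    pose proof (pow_lt 2 n). assert (1 <= 2 ^ n) by (apply pow_R1_Rle; lra). nra. }
  apply Rle_trans with (Series (fun k => weight k * (/ 4) ^ S n)).
  - apply Series_le; [|apply ex_series_weight_scal].
    intro k; split; [apply bump_nonneg|].
    eapply Rle_trans; [apply bump_le|].
    rewrite Rabs_right by lra. unfold weight. rewrite <- pow_add.
    replace (S n + k + 1)%nat with (k + 1 + S n)%nat by lia.
    pose proof (pow_lt (/ 4) (k + 1 + S n)). nra.
  - rewrite Series_weight_scal. pose proof (pow_lt (/ 4) (S n)). lra.
Qed.

(** * Points of the Cantor set *)

Fixpoint prefix_index (X : nat -> bool) (k : nat) : nat :=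
  match k with O => O | S k => 2 * prefix_index X k + Nat.b2n (X k) end.

Lemma prefix_index_lt X k : (prefix_index X k < 2 ^ k)%nat.
Proof. induction k; cbn [prefix_index Nat.pow]; [lia|]. destruct (X k); cbn; lia. Qed.

Lemma strcode_prefix X k : strcode (map X (seq 0 k)) = (2 ^ k + prefix_index X k)%nat.
Proof.
  induction k as [|k IH]; [reflexivity|].
  rewrite seq_S, map_app. unfold strcode in *. rewrite fold_left_app, IH.
  cbn [fold_left map prefix_index Nat.pow Nat.add]. destruct (X k); cbn; lia.
Qed.

Lemma lnum_S k j : lnum (S k) j = (3 * lnum k (Nat.div2 j) + 2 * parity j)%nat.
Proof. unfold lnum. cbn [tern Nat.pow]. lia. Qed.

Lemma lnum_prefix_S X k :
  lnum (S k) (prefix_index X (S k)) = (3 * lnum k (prefix_index X k) + 2 * Nat.b2n (X k))%nat.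
Proof.
  rewrite lnum_S. set (j := prefix_index X (S k)).
  pose proof (div2_parity j). assert (Nat.b2n (X k) <= 1)%nat by (destruct (X k); cbn; lia).
  assert (Nat.div2 j = prefix_index X k /\ parity j = Nat.b2n (X k)) as [-> ->]
    by (unfold j in *; cbn [prefix_index] in *; lia).
  reflexivity.
Qed.

Definition cantor_term (X : nat -> bool) (n : nat) : R :=
  2 * (if X n then 1 else 0) / 3 ^ (n + 2).

Lemma lend_prefix_S X k :
  lend (S k) (prefix_index X (S k)) = lend k (prefix_index X k) + cantor_term X k.
Proof.
  unfold lend, cantor_term. rewrite lnum_prefix_S, plus_INR, !mult_INR.
  replace (S k + 1)%nat with (S (k + 1)) by lia. replace (k + 2)%nat with (S (k + 1)) by lia.
  pose proof (pow_lt 3 (k + 1) ltac:(lra)). cbn [pow].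
  destruct (X k); cbn [Nat.b2n]; simpl INR; field; lra.
Qed.

Lemma cantor_partial_sum X N :
  sum_f_R0 (cantor_term X) N = lend (S N) (prefix_index X (S N)) - 1 / 3.
Proof.
  induction N as [|N IH]; cbn [sum_f_R0].
  - rewrite lend_prefix_S. unfold lend, lnum. simpl. field.
  - rewrite IH, (lend_prefix_S X (S N)). ring.
Qed.

Lemma prefix_intervals_nested X k m : (k <= m)%nat ->
  lend k (prefix_index X k) <= lend m (prefix_index X m) /\
  rend m (prefix_index X m) <= rend k (prefix_index X k).
Proof.
  induction 1 as [|m _ [IH1 IH2]]; [lra|].
  rewrite !rend_lend in *. rewrite lend_prefix_S. unfold cantor_term.
  replace (S m + 1)%nat with (S (m + 1)) by lia. replace (m + 2)%nat with (S (m + 1)) by lia.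
  pose proof (pow_lt 3 (m + 1) ltac:(lra)). cbn [pow].
  unfold Rdiv. rewrite !Rinv_mult. pose proof (Rinv_0_lt_compat _ H).
  destruct (X m); split; lra.
Qed.

Lemma Un_cv_bounded u l A B k :
  Un_cv u l -> (forall N, (N >= k)%nat -> A <= u N <= B) -> A <= l <= B.
Proof.
  intros Hc Hb. split.
  - destruct (Rle_lt_dec A l) as [|Hl]; auto.
    destruct (Hc (A - l)) as [N HN]; [lra|].
    specialize (HN (max N k) ltac:(lia)). specialize (Hb (max N k) ltac:(lia)).
    unfold R_dist, Rabs in HN. destruct Rcase_abs; lra.
  - destruct (Rle_lt_dec l B) as [|Hl]; auto.
    destruct (Hc (l - B)) as [N HN]; [lra|].
    specialize (HN (max N k) ltac:(lia)). specialize (Hb (max N k) ltac:(lia)).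
    unfold R_dist, Rabs in HN. destruct Rcase_abs; lra.
Qed.

Lemma cmap_in_interval X x k : is_cmap X x -> in_interval k (prefix_index X k) x.
Proof.
  intro H. unfold in_interval.
  enough (lend k (prefix_index X k) - 1 / 3 <= x - 1 / 3 <= rend k (prefix_index X k) - 1 / 3)
    by lra.
  apply (Un_cv_bounded _ _ _ _ k H). intros N HN. fold (cantor_term X).
  rewrite cantor_partial_sum. destruct (prefix_intervals_nested X k (S N)) as [H1 H2]; [lia|].
  pose proof (lend_le_rend (S N) (prefix_index X (S N))). lra.
Qed.

Lemma in_interval_unique k j j' x : (j < 2 ^ k)%nat -> (j' < 2 ^ k)%nat ->
  in_interval k j x -> in_interval k j' x -> j = j'.
Proof.
  intros Hj Hj' [A1 A2] [B1 B2]. apply (tern_inj k); auto.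
  unfold in_interval, lend, rend in *. pose proof (pow_lt 3 (k + 1) ltac:(lra)).
  assert (C : forall i i',
    INR (lnum k i) / 3 ^ (k + 1) <= (INR (lnum k i') + 1) / 3 ^ (k + 1) ->
    (lnum k i <= S (lnum k i'))%nat).
  { intros i i' Hi. apply INR_le. rewrite S_INR.
    apply Rmult_le_reg_r with (/ 3 ^ (k + 1)); [apply Rinv_0_lt_compat; lra | exact Hi]. }
  assert (C1 := C j j' ltac:(lra)). assert (C2 := C j' j ltac:(lra)).
  unfold lnum in *. lia.
Qed.

Lemma in_interval_parent k j x : in_interval (S k) j x -> in_interval k (Nat.div2 j) x.
Proof.
  unfold in_interval. rewrite !rend_lend. unfold lend. rewrite lnum_S, plus_INR, !mult_INR.
  replace (S k + 1)%nat with (S (k + 1)) by lia.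
  pose proof (pow_lt 3 (k + 1) ltac:(lra)). cbn [pow].
  assert (Hp : (parity j <= 1)%nat) by (pose proof (div2_parity j); lia). apply le_INR in Hp.
  pose proof (pos_INR (parity j)). pose proof (pos_INR (lnum k (Nat.div2 j))).
  set (l := INR (lnum k (Nat.div2 j))) in *. set (o := INR (parity j)) in *.
  set (c := 3 ^ (k + 1)) in *. simpl INR in *.
  pose proof (Rinv_0_lt_compat c H). unfold Rdiv. rewrite !Rinv_mult. intros [Hl Hr].
  split; nra.
Qed.

Lemma cmap_of_in_intervals X x :
  (forall k, in_interval k (prefix_index X k) x) -> is_cmap X x.
Proof.
  intros H eps Heps. fold (cantor_term X).
  destruct (pow_lt_1_zero (/ 3) ltac:(rewrite Rabs_right; lra) eps Heps) as [N HN].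
  exists N. intros n Hn. unfold R_dist. rewrite cantor_partial_sum.
  destruct (H (S n)) as [C1 C2]. rewrite rend_lend in C2.
  specialize (HN n Hn). rewrite Rabs_right in HN by (apply Rle_ge, pow_le; lra).
  assert (/ 3 ^ (S n + 1) <= (/ 3) ^ n).
  { rewrite pow_inv. apply Rinv_le_contravar; [apply pow_lt; lra|].
    apply Rle_pow; [lra | lia]. }
  unfold Rabs. destruct Rcase_abs; lra.
Qed.

Lemma in_C_of_intervals x :
  (forall k, exists j, (j < 2 ^ k)%nat /\ in_interval k j x) -> in_C x.
Proof.
  intro H. destruct (choice _ H) as [J HJ].
  assert (HD : forall k, Nat.div2 (J (S k)) = J k).
  { intro k. destruct (HJ k) as [A1 A2], (HJ (S k)) as [B1 B2].
    apply (in_interval_unique k _ _ x); auto; [|apply in_interval_parent; auto].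
    pose proof (div2_parity (J (S k))). cbn [Nat.pow] in B1. lia. }
  set (X := fun k => Nat.odd (J (S k))).
  assert (HX : forall k, prefix_index X k = J k).
  { induction k as [|k IH]; cbn [prefix_index].
    - destruct (HJ 0%nat) as [A _]. cbn in A. lia.
    - rewrite IH, <- HD. unfold X. symmetry. apply Nat.div2_odd. }
  exists X. apply cmap_of_in_intervals. intro k. rewrite HX. apply HJ.
Qed.

Lemma tree_code_spec T al s : tree_code T al -> (al (strcode s) <> 0%nat <-> T s).
Proof.
  intros [_ HT]. destruct (HT s) as [H1 H0]. split.
  - intro Hal. apply NNPP. intro Hs. apply Hal, H0, Hs.
  - intro Hs. rewrite H1 by exact Hs. discriminate.
Qed.

Lemma live_at_every_level_iff T al x : tree_code T al ->
  (forall k, exists j, (j < 2 ^ k)%nat /\ al (2 ^ k + j)%nat <> 0%nat /\ in_interval k j x) <->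
  in_C x /\ (forall X, is_cmap X x -> in_body T X).
Proof.
  intro Hcode. split.
  - intro Hl. split.
    + apply in_C_of_intervals. intro k. destruct (Hl k) as [j [Hj [_ Hx]]]. eauto.
    + intros X HX n. apply (tree_code_spec T al _ Hcode). rewrite strcode_prefix.
      destruct (Hl n) as [j [Hj [Hlive Hx]]].
      replace (prefix_index X n) with j; [exact Hlive|].
      apply (in_interval_unique n _ _ x); auto using prefix_index_lt, cmap_in_interval.
  - intros [[X HX] Hbody] k. exists (prefix_index X k).
    split; [apply prefix_index_lt|]. split; [|apply cmap_in_interval, HX].
    rewrite <- strcode_prefix. apply (tree_code_spec T al _ Hcode), Hbody, HX.
Qed.

Lemma fT_fixed_iff T al x : tree_code T al ->
  fT al x = x <->
  x = 0 \/ x = 1 \/ (in_C x /\ forall X, is_cmap X x -> in_body T X).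
Proof.
  intro Hcode. rewrite fT_eq_iff, <- (live_at_every_level_iff T al x Hcode).
  setoid_rewrite level_dist_eq0. split.
  - intro H. destruct (Req_dec x 0) as [|H0]; auto. destruct (Req_dec x 1) as [|H1]; auto.
    right; right. intro k. destruct (H k) as [|[|Hk]]; tauto.
  - intros [H|[H|H]] k; auto.
Qed.

(** * Exact rational approximations *)

Open Scope nat_scope.

Definition interval_dist_num (k j a b : nat) : nat :=
  (lnum k j * S b - a * 3 ^ (k + 1)) + (a * 3 ^ (k + 1) - S (lnum k j) * S b).

Fixpoint live_dist_num (al : nat -> nat) (k a b J : nat) : nat :=
  match J with
  | 0 => a * 3 ^ (k + 1)
  | S j => match al (2 ^ k + j) with
           | 0 => live_dist_num al k a b j
           | S _ => Nat.min (live_dist_num al k a b j) (interval_dist_num k j a b)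
           end
  end.

Definition level_dist_num (al : nat -> nat) (k a b : nat) : nat :=
  Nat.min (live_dist_num al k a b (2 ^ k)) ((S b - a) * 3 ^ (k + 1)).

Fixpoint approx_num (al : nat -> nat) (n a b : nat) : nat :=
  match n with
  | 0 => 12 * a + level_dist_num al 0 a b
  | S i => 12 * approx_num al i a b + level_dist_num al (S i) a b
  end.

Lemma oc_live_dist_num : ocomputable4o live_dist_num.
Proof.
  eapply ocomputable_ext with (F := fun al xs =>
    recf (fun ys => nth 1 ys 0 * 3 ^ (nth 0 ys 0 + 1))
      (fun ys => ifz (al (2 ^ nth 2 ys 0 + nth 0 ys 0)) (nth 1 ys 0)
         (Nat.min (nth 1 ys 0)
            (interval_dist_num (nth 2 ys 0) (nth 0 ys 0) (nth 3 ys 0) (nth 4 ys 0))))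
      (nth 3 xs 0) [nth 0 xs 0; nth 1 xs 0; nth 2 xs 0]).
  - unfold interval_dist_num, lnum. ocomp.
  - intros al xs.
    induction (nth 3 xs 0) as [|J IH]; cbn [recf nth live_dist_num]; [reflexivity|].
    rewrite IH. now destruct (al _).
Qed.
#[local] Hint Resolve oc_live_dist_num : ocomp.

Lemma oc_approx_num : ocomputable3o approx_num.
Proof.
  eapply ocomputable_ext with (F := fun al xs =>
    recf (fun ys => 12 * nth 0 ys 0 + level_dist_num al 0 (nth 0 ys 0) (nth 1 ys 0))
      (fun ys => 12 * nth 1 ys 0 + level_dist_num al (S (nth 0 ys 0)) (nth 2 ys 0) (nth 3 ys 0))
      (nth 0 xs 0) [nth 1 xs 0; nth 2 xs 0]).
  - unfold level_dist_num. ocomp.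
  - intros al xs. induction (nth 0 xs 0) as [|n IH]; cbn [recf nth approx_num]; congruence.
Qed.
#[local] Hint Resolve oc_approx_num : ocomp.

(* Numerator (as [zdec (2 m) = m]) and denominator minus one of the dyadic-precision
   approximation [approx_num al n a b / (S b * 12 ^ S n)] of [fT al (a / S b)]. *)
Definition code_entry (al : nat -> nat) (n a b e : nat) : nat :=
  match e with
  | 0 => 2 * approx_num al n a b
  | S _ => pred (S b * 12 ^ S n)
  end.

(* A code is read at [<0, <<a, b>, <n, e>>>] (approximations) and at [<1, m>]
   (modulus, here [S m] since [fT al] is [4/3]-Lipschitz). *)
Definition code_fun (al : nat -> nat) (N : nat) : nat :=
  ifz (unpair_l N)
      (code_entry al (unpair_l (unpair_r (unpair_r N))) (unpair_l (unpair_l (unpair_r N)))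
                     (unpair_r (unpair_l (unpair_r N))) (unpair_r (unpair_r (unpair_r N))))
      (S (unpair_r N)).

Lemma oc_code_entry : ocomputable4o code_entry.
Proof.
  eapply ocomputable_ext with (F := fun al xs =>
    ifz (nth 3 xs 0) (2 * approx_num al (nth 0 xs 0) (nth 1 xs 0) (nth 2 xs 0))
        (pred (S (nth 2 xs 0) * 12 ^ S (nth 0 xs 0)))).
  - ocomp.
  - intros al xs. now destruct (nth 3 xs 0).
Qed.
#[local] Hint Resolve oc_code_entry : ocomp.

Lemma code_fun_program : exists Phi, forall al n, eval al Phi [n] (code_fun al n).
Proof.
  assert (H : ocomputable (fun al xs => code_fun al (nth 0 xs 0))).
  { unfold code_fun. ocomp. }
  destruct H as [Phi HPhi]. exists Phi. intros al n. exact (HPhi al [n]).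
Qed.

Lemma zdec_double m : zdec (2 * m) = Z.of_nat m.
Proof. unfold zdec. rewrite Nat.even_even, Nat.div2_double. reflexivity. Qed.

Open Scope R_scope.

Lemma INR_sub_max p q : INR (p - q) = Rmax 0 (INR p - INR q).
Proof.
  destruct (le_lt_dec q p) as [H|H].
  - rewrite minus_INR by exact H. apply le_INR in H. rewrite Rmax_right; lra.
  - replace (p - q)%nat with 0%nat by lia. apply lt_INR in H. rewrite Rmax_left; simpl; lra.
Qed.

Lemma INR_min p q : INR (Nat.min p q) = Rmin (INR p) (INR q).
Proof.
  destruct (le_lt_dec p q) as [H|H].
  - rewrite Nat.min_l by exact H. apply le_INR in H. now rewrite Rmin_left.
  - rewrite Nat.min_r by lia. apply lt_INR in H. rewrite Rmin_right; lra.
Qed.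

Lemma Rmax0_mult_r u c : 0 < c -> Rmax 0 u * c = Rmax 0 (u * c).
Proof. intros. unfold Rmax. repeat destruct Rle_dec; nra. Qed.

Lemma Rmin_mult_r u v c : 0 < c -> Rmin u v * c = Rmin (u * c) (v * c).
Proof. intros. unfold Rmin. repeat destruct Rle_dec; nra. Qed.

Section ExactApproximation.
Variables (al : nat -> nat) (a b : nat).
Hypothesis Hab : (a <= S b)%nat.
Let x := INR a / INR (S b).

Let Sb_pos : 0 < INR (S b) := lt_0_INR _ (Nat.lt_0_succ b).

Lemma ratio_in01 : in01 x.
Proof.
  unfold in01, x. split.
  - apply Rdiv_le_0_compat; [apply pos_INR | exact Sb_pos].
  - apply le_INR in Hab. apply Rmult_le_reg_r with (INR (S b)); [exact Sb_pos|].
    unfold Rdiv. rewrite Rmult_assoc, Rinv_l by lra. lra.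
Qed.

Lemma interval_dist_num_eq k j :
  INR (interval_dist_num k j a b) =
  dist_interval x (lend k j) (rend k j) * (INR (S b) * 3 ^ (k + 1)).
Proof.
  pose proof (pow_lt 3 (k + 1) ltac:(lra)).
  unfold interval_dist_num, dist_interval, lend, rend, x.
  rewrite Rmult_plus_distr_r, !Rmax0_mult_r by nra.
  rewrite plus_INR, !INR_sub_max, !mult_INR, pow_INR.
  replace (INR 3) with 3 by (simpl; ring). rewrite !S_INR.
  pose proof (pos_INR b). f_equal; f_equal; field; lra.
Qed.

Lemma live_dist_num_eq k J :
  INR (live_dist_num al k a b J) = live_dist al k x J * (INR (S b) * 3 ^ (k + 1)).
Proof.
  pose proof (pow_lt 3 (k + 1) ltac:(lra)).
  induction J as [|J IH]; cbn [live_dist_num live_dist].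
  - rewrite mult_INR, pow_INR, Rabs_right by (apply Rle_ge, ratio_in01).
    replace (INR 3) with 3 by (simpl; ring). unfold x. field. lra.
  - destruct (al (2 ^ k + J)%nat); [exact IH|].
    rewrite INR_min, IH, interval_dist_num_eq, Rmin_mult_r by nra. reflexivity.
Qed.

Lemma level_dist_num_eq k :
  INR (level_dist_num al k a b) = level_dist al k x * (INR (S b) * 3 ^ (k + 1)).
Proof.
  pose proof (pow_lt 3 (k + 1) ltac:(lra)). pose proof ratio_in01 as [_ Hx1].
  unfold level_dist_num, level_dist.
  rewrite INR_min, live_dist_num_eq, Rmin_mult_r by nra. f_equal.
  rewrite mult_INR, pow_INR, minus_INR, Rabs_right by (lia || lra).
  replace (INR 3) with 3 by (simpl; ring). unfold x. field. lra.
Qed.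

Lemma approx_num_eq n :
  INR (approx_num al n a b) / (INR (S b) * 12 ^ S n) = x + sum_f_R0 (bump al x) n.
Proof.
  induction n as [|n IH]; cbn [approx_num sum_f_R0].
  - rewrite plus_INR, mult_INR, level_dist_num_eq.
    replace (INR 12) with 12 by (simpl; ring).
    unfold bump, weight, x. cbn [pow Nat.add]. field. lra.
  - rewrite plus_INR, mult_INR, level_dist_num_eq, <- Rplus_assoc, <- IH.
    replace (INR 12) with 12 by (simpl; ring). unfold bump, weight.
    replace (S n + 1)%nat with (S (S n)) by lia.
    replace (12 ^ S (S n)) with (4 ^ S (S n) * 3 ^ S (S n))
      by (rewrite <- Rpow_mult_distr; f_equal; ring).
    replace (12 ^ S n) with (4 ^ S n * 3 ^ S n) by (rewrite <- Rpow_mult_distr; f_equal; ring).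
    rewrite pow_inv. cbn [pow].
    pose proof (pow_lt 4 n ltac:(lra)). pose proof (pow_lt 3 n ltac:(lra)).
    field. repeat split; lra.
Qed.

End ExactApproximation.

Lemma code_fun_is_code al : is_code (code_fun al) (fT al).
Proof.
  split.
  - intros a b n Hab. unfold code_approx, code_fun.
    autorewrite with unpair. cbn [ifz code_entry].
    rewrite zdec_double, <- INR_IZR_INZ.
    assert (Hp : (0 < S b * 12 ^ S n)%nat) by (pose proof (Nat.pow_nonzero 12 (S n)); lia).
    rewrite Nat.succ_pred_pos by exact Hp.
    rewrite mult_INR, pow_INR. replace (INR 12) with 12 by (simpl; ring).
    rewrite approx_num_eq by exact Hab. apply fT_partial_sum, ratio_in01, Hab.
  - intros m x y Hx Hy Hxy. unfold code_modulus, code_fun in Hxy.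
    autorewrite with unpair in Hxy. cbn [ifz pow] in Hxy. eapply Rle_lt_trans; [apply fT_lip|].
    pose proof (pow_lt (/ 2) m ltac:(lra)). nra.
Qed.

Theorem lemma3p2 :
  exists Phi : prog,
    forall (T : list bool -> Prop) (alpha : nat -> nat),
      is_tree T -> tree_code T alpha -> computable alpha ->
      exists (h : nat -> nat) (f : R -> R),
        (forall n, eval alpha Phi [n] (h n)) /\
        is_code h f /\
        (forall x, in01 x -> in01 (f x)) /\
        (forall x, in01 x -> forall eps, 0 < eps -> exists delta, 0 < delta /\
           forall y, in01 y -> Rabs (y - x) < delta -> Rabs (f y - f x) < eps) /\
        (forall x y, in01 x -> in01 y -> x < y -> f x < f y) /\
        (forall x, in01 x -> x <= f x) /\
        (forall x, in01 x ->
           (f x = x <->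
            (x = 0 \/ x = 1 \/
             (in_C x /\ forall X, is_cmap X x -> in_body T X)))).
Proof.
  destruct code_fun_program as [Phi HPhi]. exists Phi.
  intros T alpha _ Hcode _. exists (code_fun alpha), (fT alpha).
  split; [apply HPhi|]. split; [apply code_fun_is_code|]. split; [apply fT_in01|].
  split.
  { intros x _ eps Heps. destruct (fT_continuous alpha x eps Heps) as [d [Hd Hc]].
    exists d. split; auto. }
  split; [intros x y _ _; apply fT_increasing|]. split; [intros x _; apply fT_ge|].
  intros x _. exact (fT_fixed_iff T alpha x Hcode).
Qed.
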